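(* Let the labels $\{1,\dots,k\}$ be partitioned into $b\ge2$ blocks all of size $s=k/b\ge2$, let $L_{01}(i,j)=[i\ne j]$, $L_{01,b}(i,j)=[i\text{ and }j\text{ not in the same block}]$, and for $0\le\eta\le1$ let $L_{01,b,\eta}=\eta L_{01}+(1-\eta)L_{01,b}$, with quadratic surrogate $\Phi_{quad}(f,y)=\frac1{2k}\|f+L_{01,b,\eta}(:,y)\|_2^2$. If the scores are constrained to be equal inside the blocks, i.e. to lie in $\mathcal{F}_{01,b}=\mathrm{span}(L_{01,b})$, then $$H_{\Phi_{quad},L_{01,b,\eta},\mathcal{F}_{01,b}}(\varepsilon)=\begin{cases}\dfrac{(\varepsilon-\frac\eta2)^2}{4b}\cdot\dfrac{(\frac{\eta b}{k}+1-\eta)^2}{(1-\frac\eta2)^2}, & \frac\eta2\le\varepsilon\le1,\\[2mm] 0, & 0\le\varepsilon\le\frac\eta2,\end{cases}$$ so the surrogate is consistent up to level $\frac\eta2$.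
   Context: $\mathrm{span}(L)$ is the column space. $\mathrm{pred}(f)$ is the smallest index maximizing $f_c$. For $q\in\Delta_k$: $\ell(f,q)=\sum_cq_cL(\mathrm{pred}(f),c)$, $\phi(f,q)=\sum_cq_c\Phi(f,c)$, $\delta\ell(f,q)=\ell(f,q)-\inf_{\hat f\in\mathcal{F}}\ell(\hat f,q)$, $\delta\phi(f,q)=\phi(f,q)-\inf_{\hat f\in\mathcal{F}}\phi(\hat f,q)$; calibration function $H_{\Phi,L,\mathcal{F}}(\varepsilon)=\inf\{\delta\phi(f,q):f\in\mathcal{F},q\in\Delta_k,\delta\ell(f,q)\ge\varepsilon\}$ ($+\infty$ if empty). A surrogate is consistent up to level $\eta'\ge0$ if $H(\varepsilon)>0$ for all $\varepsilon>\eta'$ and $H(\hat\varepsilon)$ is finite for some $\hat\varepsilon>\eta'$. *)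

From HB Require Import structures.
From mathcomp Require Import all_boot all_order all_algebra.
From mathcomp Require Import all_classical all_reals.
From mathcomp Require Import ereal.
Set Implicit Arguments. Unset Strict Implicit. Unset Printing Implicit Defensive.
Import Order.TTheory GRing.Theory Num.Theory.
Local Open Scope ring_scope.
Local Open Scope classical_set_scope.

(* Labels are 'I_k; a loss is a k x k matrix given as a function L i j
   (i = prediction, j = true label); scores are functions f : 'I_k -> R. *)

Definition loss01 (R : realType) (k : nat) (i j : 'I_k) : R := (i != j)%:R.

Definition loss01b (R : realType) (b s : nat) (i j : 'I_(b * s)) : R :=
  ((i %/ s)%N != (j %/ s)%N)%:R.

Definition loss01beta (R : realType) (b s : nat) (eta : R) (i j : 'I_(b * s)) : R :=
  eta * loss01 R i j + (1 - eta) * @loss01b R b s i j.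

Definition colspan (R : realType) (k : nat) (L : 'I_k -> 'I_k -> R)
  : set ('I_k -> R) :=
  [set f | exists alpha : 'I_k -> R, forall c, f c = \sum_(j < k) L c j * alpha j].

Definition simplex (R : realType) (k : nat) : set ('I_k -> R) :=
  [set q | (forall c, 0 <= q c) /\ \sum_(c < k) q c = 1].

(* pred(f): smallest index maximizing f (None only if k = 0) *)
Definition predf (R : realType) (k : nat) (f : 'I_k -> R) : option 'I_k :=
  [pick i | [forall j, (f j < f i) || ((f j == f i) && (nat_of_ord i <= nat_of_ord j)%N)]].

Definition task_risk (R : realType) (k : nat) (L : 'I_k -> 'I_k -> R)
  (f q : 'I_k -> R) : R :=
  if predf f is Some i then \sum_(c < k) q c * L i c else 0.

Definition surr_risk (R : realType) (k : nat) (Phi : ('I_k -> R) -> 'I_k -> R)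
  (f q : 'I_k -> R) : R :=
  \sum_(c < k) q c * Phi f c.

Definition excess (R : realType) (k : nat)
  (risk : ('I_k -> R) -> ('I_k -> R) -> R) (F : set ('I_k -> R))
  (f q : 'I_k -> R) : R :=
  risk f q - inf [set risk g q | g in F].

(* calibration function H_{Phi,L,F}(eps), +oo if the set is empty *)
Definition calib (R : realType) (k : nat) (Phi : ('I_k -> R) -> 'I_k -> R)
  (L : 'I_k -> 'I_k -> R) (F : set ('I_k -> R)) (eps : R) : \bar R :=
  ereal_inf [set x : \bar R | exists f q, F f /\ simplex q /\
     eps <= excess (task_risk L) F f q /\
     x = (excess (surr_risk Phi) F f q)%:E].

Definition consistent_up_to (R : realType) (H : R -> \bar R) (eta' : R) : Prop :=
  (forall eps, eta' < eps -> (0 < H eps)%E) /\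
  (exists eps, eta' < eps /\ H eps \is a fin_num).

Definition Phi_quad (R : realType) (k : nat) (L : 'I_k -> 'I_k -> R)
  (f : 'I_k -> R) (y : 'I_k) : R :=
  (2 * k%:R)^-1 * \sum_(c < k) (f c + L c y) ^+ 2.

From HB Require Import structures.
From mathcomp Require Import all_boot all_order all_algebra.
From mathcomp Require Import all_classical all_reals.
From mathcomp Require Import ereal.
From mathcomp Require Import ring lra zify.
Import Order.TTheory GRing.Theory Num.Theory.
Local Open Scope ring_scope.
Set Implicit Arguments. Unset Strict Implicit.

(* Scores in [span L_{01,b}] are exactly the block-constant vectors, so a score always
   predicts the first label of a block, and over them the quadratic surrogate is minimised
   by the projection [f0 = alpha Q_B - 1] of [- expected_loss L q] ([Q_B] the mass of block
   [B], [alpha = eta / s + 1 - eta]), with excess [||f - f0||^2 / 2k] by Pythagoras.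
   If [f] predicts label [i] while the best first-of-block label [j] lies in another block,
   put [d = Q_J - Q_I]: the task excess is at most [eta / 2 + (1 - eta / 2) d], while
   [f j <= f i] forces the deviations of [f] on the two blocks to differ by at least
   [alpha d], so the surrogate excess is at least [alpha^2 d^2 / 4b]. A two-block
   distribution attains both bounds; solving [eps = eta / 2 + (1 - eta / 2) d] for [d]
   gives the calibration function. *)

Lemma big_ord_mul (T : Type) (idx : T) (op : Monoid.law idx) n m (F : nat -> T) :
  \big[op/idx]_(j < n * m) F j = \big[op/idx]_(B < n) \big[op/idx]_(t < m) F (B * m + t)%N.
Proof.
elim: n => [|n IH]; first by rewrite mul0n !big_ord0.
rewrite mulSnr big_split_ord /= IH big_ord_recr /=.
by congr (op _ _); apply: eq_bigr => t _; rewrite addnC.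
Qed.

Lemma sum_indicator_eq (R : pzSemiRingType) n (h : 'I_n -> R) (i : 'I_n) :
  \sum_(y < n) (y == i)%:R * h y = h i.
Proof.
rewrite (bigD1 i) //= eqxx mul1r big1 ?addr0 // => c /negPf ->.
by rewrite mul0r.
Qed.

Section Predf.
Variables (R : realType) (k : nat).
Implicit Types (f : 'I_k -> R) (i j : 'I_k).

Lemma predf_max f i : predf f = Some i -> forall j, f j <= f i /\ (f j = f i -> (i <= j)%N).
Proof.
rewrite /predf; case: pickP => // i' /forallP H [<-] j.
case/orP: (H j) => [lt|/andP[/eqP -> ->]]; last by [].
by split; [apply: ltW | move=> e; move: lt; rewrite e ltxx].
Qed.

Lemma predf_Some f i :
  (forall j, f j < f i \/ (f j = f i /\ (i <= j)%N)) -> predf f = Some i.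
Proof.
move=> H; rewrite /predf; case: pickP => [i' /forallP H'|].
  congr Some; case/orP: (H' i) => [lt1|/andP[/eqP e1 l1]];
  case: (H i') => [lt2|[e2 l2]].
  - by move: (lt_trans lt1 lt2); rewrite ltxx.
  - by move: lt1; rewrite e2 ltxx.
  - by move: lt2; rewrite e1 ltxx.
  - by apply/val_inj/anti_leq; rewrite l1 l2.
move/(_ i)/forallP; case => j; apply/orP.
by case: (H j) => [->|[e ->]]; [left | right; rewrite e eqxx].
Qed.

Lemma predf_exists f : (0 < k)%N -> exists i, predf f = Some i.
Proof.
move=> k_gt0; pose i0 : 'I_k := Ordinal k_gt0.
have [imax _ fmax] := @arg_maxP _ _ _ i0 xpredT f erefl.
have [i /eqP fi imin] :=
  @arg_minP _ _ _ imax (fun j => f j == f imax) (fun j : 'I_k => nat_of_ord j) (eqxx _).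
exists i; apply: predf_Some => j.
have : f j <= f i by rewrite fi; exact: fmax.
rewrite le_eqVlt => /orP[/eqP e|->]; last by left.
by right; split => //; apply: imin; rewrite e fi.
Qed.

End Predf.

Section Excess.
Variables (R : realType) (k : nat).
Variables (risk : ('I_k -> R) -> ('I_k -> R) -> R) (F : set ('I_k -> R)).
Implicit Types (f g h q : 'I_k -> R).

Lemma excess_le f q m : (exists g, F g) -> (forall g, F g -> m <= risk g q) ->
  excess risk F f q <= risk f q - m.
Proof.
move=> [g0 Fg0] lb; apply: lerB => //; apply: lb_le_inf; first by exists (risk g0 q), g0.
by move=> _ [g Fg <-]; apply: lb.
Qed.

Lemma excess_ge f g q m : F g -> (forall h, F h -> m <= risk h q) ->
  risk f q - risk g q <= excess risk F f q.
Proof.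
move=> Fg lb; apply: lerB => //; apply: ge_inf; last by exists g.
by exists m => _ [h Fh <-]; apply: lb.
Qed.

Lemma excess_argmin f g q : F g -> (forall h, F h -> risk g q <= risk h q) ->
  excess risk F f q = risk f q - risk g q.
Proof.
by move=> Fg gmin; apply/le_anti; rewrite excess_le ?(excess_ge f Fg gmin) //; exists g.
Qed.

End Excess.

Section Risks.
Variables (R : realType) (k : nat) (L : 'I_k -> 'I_k -> R).
Implicit Types (f g q : 'I_k -> R) (i : 'I_k).

Definition expected_loss q i : R := \sum_(c < k) q c * L i c.

Lemma task_risk_predf f q i : predf f = Some i -> task_risk L f q = expected_loss q i.
Proof. by rewrite /task_risk => ->. Qed.

Lemma surr_risk_quadB_orth q f g :
  \sum_(c < k) q c = 1 ->
  \sum_(c < k) (f c - g c) * (g c + expected_loss q c) = 0 ->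
  surr_risk (Phi_quad L) f q - surr_risk (Phi_quad L) g q =
  (2 * k%:R)^-1 * \sum_(c < k) (f c - g c) ^+ 2.
Proof.
move=> q1 orth; rewrite /surr_risk /Phi_quad -sumrB.
rewrite (eq_bigr (fun y => (2 * k%:R)^-1 *
    \sum_(c < k) q y * ((f c + L c y) ^+ 2 - (g c + L c y) ^+ 2))); last first.
  by move=> y _; rewrite -mulrBr -mulrBr -sumrB mulrCA mulr_sumr.
rewrite -mulr_sumr exchange_big /=; congr (_ * _).
transitivity (\sum_(c < k) ((f c - g c) ^+ 2 + 2 * ((f c - g c) * (g c + expected_loss q c)))).
  apply: eq_bigr => c _.
  rewrite (eq_bigr (fun y => (f c - g c) ^+ 2 * q y +
    2 * (f c - g c) * (g c * q y + q y * L c y))); last by move=> y _; ring.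
  rewrite big_split /= -!mulr_sumr big_split /= -mulr_sumr q1 /expected_loss.
  by rewrite !mulr1 mulrA.
by rewrite big_split /= -mulr_sumr orth mulr0 addr0.
Qed.

End Risks.

Section Blocks.
Variables (R : realType) (b s : nat).
Hypothesis s_gt0 : (0 < s)%N.
Local Notation k := (b * s)%N.
Local Notation blk i := (nat_of_ord i %/ s)%N.
Implicit Types (f h q : 'I_k -> R) (i j : 'I_k).

Definition block_const f := forall i j, blk i = blk j -> f i = f j.

Definition block_mass q (B : nat) : R := \sum_(y < k) (blk y == B)%:R * q y.

Lemma blk_lt i : (blk i < b)%N.
Proof. by rewrite ltn_divLR. Qed.

Lemma count_block (B : nat) : (B < b)%N -> \sum_(j < k) ((blk j == B)%:R : R) = s%:R.
Proof.
move=> Bb; rewrite -natr_sum; congr _%:R.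
rewrite (big_ord_mul _ _ _ (fun n => nat_of_bool (n %/ s == B)%N)).
rewrite (bigD1 (Ordinal Bb)) //= [X in (_ + X)%N]big1 ?addn0; last first.
  move=> B' /negPf neqB; rewrite big1 // => t _; rewrite divnMDl // divn_small //.
  by rewrite addn0; move: neqB; rewrite -val_eqE /= => ->.
rewrite (eq_bigr (fun _ => 1%N)) ?sum_nat_const ?card_ord ?muln1 // => t _.
by rewrite divnMDl // divn_small // addn0 eqxx.
Qed.

Lemma sum_block h i : block_const h ->
  \sum_(c < k) (blk c == blk i)%:R * h c = s%:R * h i.
Proof.
move=> hc; transitivity (\sum_(c < k) (blk c == blk i)%:R * h i).
  by apply: eq_bigr => c _; case: eqP => [/hc -> //|_]; rewrite !mul0r.
by rewrite -mulr_suml count_block ?blk_lt.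
Qed.

Lemma sum_block_mass q h : block_const h ->
  \sum_(c < k) h c * block_mass q (blk c) = s%:R * \sum_(c < k) h c * q c.
Proof.
move=> hh; rewrite /block_mass.
under eq_bigr do rewrite mulr_sumr.
rewrite exchange_big /= mulr_sumr; apply: eq_bigr => y _.
rewrite (eq_bigr (fun c : 'I_k => (blk c == blk y)%:R * h c * q y)); last first.
  by move=> c _; rewrite eq_sym; ring.
by rewrite -mulr_suml sum_block // mulrA.
Qed.

Lemma colspan_block_const f : colspan (@loss01b R b s) f -> block_const f.
Proof.
by move=> [a fa] i j ij; rewrite !fa; apply: eq_bigr => c _; rewrite /loss01b ij.
Qed.

(* For block-constant [a], [L_{01,b} a = T - s a] where [T] is the total of [a]:
   solve for [a], then for [T] by summing over all labels. *)
Lemma block_const_colspan f : (1 < b)%N -> block_const f -> colspan (@loss01b R b s) f.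
Proof.
move=> b_gt1 hf.
pose T := (\sum_(j < k) f j) / s%:R / (b%:R - 1).
pose a := fun j : 'I_k => (T - f j) / s%:R.
have ha : block_const a by move=> i j /hf; rewrite /a => ->.
have sP : (s%:R : R) != 0 by rewrite pnatr_eq0 -lt0n.
have bP : (b%:R - 1 : R) != 0 by rewrite subr_eq0 pnatr_eq1 gtn_eqF.
exists a => c.
rewrite (eq_bigr (fun j => a j - (blk j == blk c)%:R * a j)); last first.
  move=> j _; rewrite /loss01b eq_sym.
  by case: eqP => _; rewrite ?mul1r ?mul0r ?subr0 ?subrr.
rewrite sumrB sum_block // /a -mulr_suml sumrB sumr_const card_ord.
by rewrite /T -[_ *+ k]mulr_natr natrM; field; rewrite sP bP.
Qed.

Lemma predf_block_first f i : block_const f -> predf f = Some i -> (i %% s = 0)%N.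
Proof.
move=> hf /predf_max fmax.
have lt : (i - i %% s < k)%N by apply: leq_ltn_trans (leq_subr _ _) (ltn_ord i).
have e : (i - i %% s = blk i * s)%N by rewrite {1}(divn_eq i s) addnK.
have [_] := fmax (Ordinal lt); rewrite (hf (Ordinal lt) i) /=; last by rewrite e mulnK.
by move/(_ erefl); have := leq_mod i s; lia.
Qed.

Lemma block_mass_ge0 q B : (forall c, 0 <= q c) -> 0 <= block_mass q B.
Proof. by move=> q0; apply: sumr_ge0 => c _; rewrite mulr_ge0 ?ler0n. Qed.

Lemma le_block_mass q i : (forall c, 0 <= q c) -> q i <= block_mass q (blk i).
Proof.
move=> q0; rewrite /block_mass (bigD1 i) //= eqxx mul1r lerDl.
by apply: sumr_ge0 => c _; rewrite mulr_ge0 ?ler0n.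
Qed.

Lemma block_massD_le1 q i j : simplex q -> blk i != blk j ->
  block_mass q (blk i) + block_mass q (blk j) <= 1.
Proof.
move=> [q0 <-] /negPf eij; rewrite /block_mass -big_split; apply: ler_sum => c _ /=.
rewrite -mulrDl; case: eqP => [->|_]; case: eqP => [e|_] //=.
- by move: eij; rewrite e eqxx.
- by rewrite addr0 mul1r.
- by rewrite add0r mul1r.
- by rewrite addr0 mul0r.
Qed.

End Blocks.

Section MixedLoss.
Variables (R : realType) (b s : nat) (eta : R).
Hypotheses (b_gt1 : (1 < b)%N) (s_gt0 : (0 < s)%N) (eta_ge0 : 0 <= eta) (eta_le1 : eta <= 1).
Local Notation k := (b * s)%N.
Local Notation blk i := (nat_of_ord i %/ s)%N.
Local Notation L := (@loss01beta R b s eta).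
Local Notation F := (colspan (@loss01b R b s)).
Local Notation Phi := (Phi_quad L).
Local Notation Q := (@block_mass R b s).
Implicit Types (f g h q : 'I_k -> R) (i j : 'I_k).

Let b_gt0 : (0 < b)%N. Proof. exact: ltnW. Qed.
Let k_gt0 : (0 < k)%N. Proof. by rewrite muln_gt0 b_gt0. Qed.

Lemma expected_loss01beta q i : \sum_(c < k) q c = 1 ->
  expected_loss L q i = eta * (1 - q i) + (1 - eta) * (1 - Q q (blk i)).
Proof.
move=> q1; rewrite /expected_loss.
rewrite (eq_bigr (fun c => eta * (q c - (c == i)%:R * q c) +
   (1 - eta) * (q c - (blk c == blk i)%:R * q c))); last first.
  move=> c _; rewrite /loss01beta /loss01 /loss01b (eq_sym i) (eq_sym (blk i)).
  by case: eqP => _; case: eqP => _ /=; ring.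
by rewrite big_split /= -!mulr_sumr !sumrB sum_indicator_eq q1.
Qed.

Definition alpha : R := eta / s%:R + 1 - eta.

Lemma alpha_gt0 : 0 < alpha.
Proof.
rewrite /alpha; have sP : (0 : R) < s%:R by rewrite ltr0n.
have [->|ne] := eqVneq eta 1; first by rewrite addrK mul1r invr_gt0.
have : eta < 1 by rewrite lt_neqAle ne.
have : 0 <= eta / s%:R by rewrite divr_ge0 // ltW.
lra.
Qed.

(* The orthogonal projection of [- expected_loss L q] on the block-constant vectors,
   i.e. minus its block averages. *)
Definition surr_argmin q i : R := alpha * Q q (blk i) - 1.

Lemma surr_argmin_block_const q : block_const (surr_argmin q).
Proof. by move=> i j e; rewrite /surr_argmin e. Qed.

Lemma surr_argmin_orth q h : \sum_(c < k) q c = 1 -> block_const h ->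
  \sum_(c < k) h c * (surr_argmin q c + expected_loss L q c) = 0.
Proof.
move=> q1 hh.
have sP : (s%:R : R) != 0 by rewrite pnatr_eq0 -lt0n.
rewrite (eq_bigr (fun c => eta / s%:R * (h c * Q q (blk c)) - eta * (h c * q c))); last first.
  by move=> c _; rewrite /surr_argmin expected_loss01beta // /alpha; ring.
by rewrite sumrB -!mulr_sumr sum_block_mass //; field.
Qed.

Lemma surr_excess_quad q f : \sum_(c < k) q c = 1 -> F f ->
  excess (surr_risk Phi) F f q = (2 * k%:R)^-1 * \sum_(c < k) (f c - surr_argmin q c) ^+ 2.
Proof.
have dist g : block_const g -> \sum_(c < k) q c = 1 ->
    surr_risk Phi g q - surr_risk Phi (surr_argmin q) q =
    (2 * k%:R)^-1 * \sum_(c < k) (g c - surr_argmin q c) ^+ 2.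
  move=> hg q1; apply: surr_risk_quadB_orth => //; apply: surr_argmin_orth => // i j e.
  by rewrite (hg _ _ e) (surr_argmin_block_const q e).
move=> q1 /colspan_block_const hf.
rewrite (excess_argmin f (block_const_colspan s_gt0 b_gt1 (surr_argmin_block_const q))) ?dist //.
move=> g /colspan_block_const hg; rewrite -subr_ge0 dist //.
by rewrite mulr_ge0 ?invr_ge0 ?mulr_ge0 ?ler0n ?sumr_ge0 // => c _; apply: sqr_ge0.
Qed.

Lemma surr_excess_ge0 q f : \sum_(c < k) q c = 1 -> F f ->
  0 <= excess (surr_risk Phi) F f q.
Proof.
move=> q1 Ff; rewrite surr_excess_quad //.
by rewrite mulr_ge0 ?invr_ge0 ?mulr_ge0 ?ler0n ?sumr_ge0 // => c _; apply: sqr_ge0.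
Qed.

Lemma min_task_risk_block_first q : exists j, (j %% s = 0)%N /\
  forall g, F g -> expected_loss L q j <= task_risk L g q.
Proof.
have [j /eqP j0 jmin] :=
  @arg_minP _ _ _ (Ordinal k_gt0) (fun j => j %% s == 0)%N (expected_loss L q)
    (introT eqP (mod0n s)).
exists j; split => // g /colspan_block_const hg.
have [i ei] := predf_exists g k_gt0.
by rewrite (task_risk_predf _ _ ei); apply/jmin/eqP/(predf_block_first s_gt0 hg ei).
Qed.

Lemma expected_loss_gap q i j : simplex q -> blk i != blk j ->
  expected_loss L q i - expected_loss L q j <=
  eta / 2 + (1 - eta / 2) * (Q q (blk j) - Q q (blk i)).
Proof.
move=> Sq eij; have [q0 q1] := Sq.
rewrite !expected_loss01beta //.
have := block_massD_le1 Sq eij; have := le_block_mass j q0; have := q0 i => qi0 qj Qij.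
suff : 0 <= eta * (1 + Q q (blk j) - Q q (blk i) - 2 * q j + 2 * q i) by lra.
by rewrite mulr_ge0 //; lra.
Qed.

Lemma surr_excess_gap q f i j : block_const f -> f j <= f i -> blk i != blk j ->
  0 <= Q q (blk j) - Q q (blk i) ->
  alpha ^+ 2 * (Q q (blk j) - Q q (blk i)) ^+ 2 / (4 * b%:R) <=
  (2 * k%:R)^-1 * \sum_(c < k) (f c - surr_argmin q c) ^+ 2.
Proof.
move=> hf fji /negPf eij d0.
set d := _ - _ in d0 *.
set x := f i - surr_argmin q i; set y := f j - surr_argmin q j.
have hsq : block_const (fun c => (f c - surr_argmin q c) ^+ 2).
  by move=> i' j' e; rewrite (hf _ _ e) (surr_argmin_block_const q e).
have sum_ge : s%:R * (x ^+ 2 + y ^+ 2) <= \sum_(c < k) (f c - surr_argmin q c) ^+ 2.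
  rewrite mulrDr -(sum_block s_gt0 i hsq) -(sum_block s_gt0 j hsq) -big_split.
  apply: ler_sum => c _ /=; rewrite -mulrDl; have := sqr_ge0 (f c - surr_argmin q c).
  case: eqP => [->|_]; case: eqP => [e|_] /=; rewrite ?eij ?addr0 ?add0r ?mul1r ?mul0r //.
  by move: eij; rewrite e eqxx.
(* [f j <= f i] while [surr_argmin] is larger by [alpha * d] on the block of [j] *)
have xy : alpha * d <= x - y by rewrite /x /y /surr_argmin /d; lra.
have ad0 : 0 <= alpha * d by rewrite mulr_ge0 // ltW ?alpha_gt0.
have sq2 : alpha ^+ 2 * d ^+ 2 <= 2 * (x ^+ 2 + y ^+ 2) by have := sqr_ge0 (x + y); nra.
have sP : (0 : R) < s%:R by rewrite ltr0n.
have bP : (0 : R) < b%:R by rewrite ltr0n b_gt0.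
have k2_ge0 : 0 <= (2 * k%:R : R)^-1 by rewrite invr_ge0 mulr_ge0 ?ler0n.
apply: le_trans (ler_wpM2l k2_ge0 sum_ge).
have -> : (2 * k%:R)^-1 * (s%:R * (x ^+ 2 + y ^+ 2)) = (x ^+ 2 + y ^+ 2) / (2 * b%:R).
  by rewrite natrM; field; rewrite !gt_eqF.
have -> : alpha ^+ 2 * d ^+ 2 / (4 * b%:R) = alpha ^+ 2 * d ^+ 2 / 2 / (2 * b%:R).
  by field; rewrite gt_eqF.
by rewrite ler_wpM2r ?invr_ge0 ?mulr_ge0 ?ler0n //; lra.
Qed.

Lemma excess_gap_bounds q f : simplex q -> F f -> exists d : R, d <= 1 /\
  excess (task_risk L) F f q <= eta / 2 + (1 - eta / 2) * d /\
  (0 <= d -> alpha ^+ 2 * d ^+ 2 / (4 * b%:R) <= excess (surr_risk Phi) F f q).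
Proof.
move=> Sq Ff; have [q0 q1] := Sq; have hf := colspan_block_const Ff.
have [i ei] := predf_exists f k_gt0.
have [j [j0 jmin]] := min_task_risk_block_first q.
have task_le : excess (task_risk L) F f q <= expected_loss L q i - expected_loss L q j.
  by rewrite -(task_risk_predf _ _ ei); apply: excess_le => //; exists f.
have [eij|eij] := eqVneq (blk i) (blk j).
  have ij : i = j.
    apply: val_inj; rewrite /= (divn_eq i s) (divn_eq j s).
    by rewrite (predf_block_first s_gt0 hf ei) j0 eij.
  exists 0; rewrite ij subrr in task_le; split; first exact: ler01.
  split; first by rewrite mulr0 addr0 (le_trans task_le) // divr_ge0.
  by rewrite expr0n /= mulr0 mul0r => _; apply: surr_excess_ge0.
exists (Q q (blk j) - Q q (blk i)); split.
  by have := block_massD_le1 Sq eij; have := block_mass_ge0 (blk i) q0; lra.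
split; first exact: le_trans task_le (expected_loss_gap Sq eij).
rewrite surr_excess_quad //; exact: surr_excess_gap hf (predf_max ei j).1 eij.
Qed.

(* Attains both bounds of [excess_gap_bounds]: [example_score] ties blocks [0] and [1],
   hence predicts label [0], which has no mass, while label [s] is optimal. *)
Definition example_dist (d : R) (y : 'I_k) : R :=
  (y == 1 :> nat)%:R * ((1 - d) / 2) + (y == s :> nat)%:R * ((1 + d) / 2).

Definition example_score (y : 'I_k) : R := if (blk y <= 1)%N then alpha / 2 - 1 else -1.

Lemma example_score_colspan : F example_score.
Proof. by apply: block_const_colspan => // i j e; rewrite /example_score e. Qed.

Section Example.
Hypothesis s_gt1 : (1 < s)%N.
Variable d : R.

Let one_lt_k : (1 < k)%N.
Proof. by apply: leq_trans s_gt1 _; rewrite leq_pmull // b_gt0. Qed.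
Let s_lt_k : (s < k)%N. Proof. by rewrite ltn_Pmull. Qed.
Let blk_s : blk (Ordinal s_lt_k) = 1%N. Proof. by rewrite /= divnn s_gt0. Qed.

Let example_distE y : example_dist d y =
  (y == Ordinal one_lt_k)%:R * ((1 - d) / 2) + (y == Ordinal s_lt_k)%:R * ((1 + d) / 2).
Proof. by []. Qed.

Lemma example_dist_sum1 : \sum_(y < k) example_dist d y = 1.
Proof.
under eq_bigr do rewrite example_distE.
by rewrite big_split /= (sum_indicator_eq (fun _ => _)) (sum_indicator_eq (fun _ => _)); lra.
Qed.

Lemma example_dist_simplex : -1 <= d -> d <= 1 -> simplex (example_dist d).
Proof.
move=> d_geN1 d_le1; split; last exact: example_dist_sum1.
by move=> y; rewrite addr_ge0 // mulr_ge0 ?ler0n //; lra.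
Qed.

Lemma block_mass_example_dist B :
  Q (example_dist d) B = (0 == B)%N%:R * ((1 - d) / 2) + (1 == B)%N%:R * ((1 + d) / 2).
Proof.
rewrite /block_mass (eq_bigr (fun y =>
    (y == Ordinal one_lt_k)%:R * ((blk y == B)%:R * ((1 - d) / 2)) +
    (y == Ordinal s_lt_k)%:R * ((blk y == B)%:R * ((1 + d) / 2)))) => [|y _].
  by rewrite big_split /= !sum_indicator_eq blk_s /= divn_small.
by rewrite example_distE; ring.
Qed.

Lemma example_task_excess :
  eta / 2 + (1 - eta / 2) * d <= excess (task_risk L) F example_score (example_dist d).
Proof.
pose g (y : 'I_k) : R := (blk y == 1%N)%:R.
have Fg : F g by apply: block_const_colspan => // i j e; rewrite /g e.
have pf : predf example_score = Some (Ordinal k_gt0).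
  apply: predf_Some => j; rewrite /example_score /= div0n /=.
  by case: ifP => _; [right | left; have := alpha_gt0; lra].
have pg : predf g = Some (Ordinal s_lt_k).
  apply: predf_Some => j; rewrite /g blk_s eqxx.
  case: eqP => [e|_]; last by left; rewrite ltr01.
  right; split => //; apply: (@leq_trans (1 * s)); first by rewrite mul1n.
  by rewrite -leq_divRL // e.
have [j [_ jmin]] := min_task_risk_block_first (example_dist d).
apply: le_trans (excess_ge _ Fg jmin).
rewrite (task_risk_predf _ _ pf) (task_risk_predf _ _ pg).
rewrite !expected_loss01beta ?example_dist_sum1 //.
rewrite !block_mass_example_dist blk_s /= div0n /= /example_dist /=.
by rewrite (gtn_eqF s_gt1) (ltn_eqF s_gt0) eqxx /=; lra.
Qed.

Lemma example_surr_excess :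
  excess (surr_risk Phi) F example_score (example_dist d) = alpha ^+ 2 * d ^+ 2 / (4 * b%:R).
Proof.
rewrite (surr_excess_quad example_dist_sum1 example_score_colspan).
rewrite (eq_bigr (fun y => ((blk y == 0%N)%:R + (blk y == 1%N)%:R) * (alpha * d / 2) ^+ 2)).
  rewrite -mulr_suml big_split /= !count_block ?b_gt0 // natrM.
  by field; rewrite !pnatr_eq0 -!lt0n s_gt0 b_gt0.
move=> y _; rewrite /example_score /surr_argmin block_mass_example_dist.
by case: (blk y) => [|[|n]] /=; ring.
Qed.

End Example.

End MixedLoss.

Section Calibration.
Variables (R : realType) (b s : nat) (eta : R).
Hypotheses (b_gt1 : (1 < b)%N) (s_gt1 : (1 < s)%N) (eta_ge0 : 0 <= eta) (eta_le1 : eta <= 1).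
Local Notation L := (@loss01beta R b s eta).
Local Notation F := (colspan (@loss01b R b s)).
Local Notation H := (calib (Phi_quad L) L F).
Local Notation alpha := (@alpha R s eta).
Local Notation score := (@example_score R b s eta).
Local Notation dist := (@example_dist R b s).

Let s_gt0 : (0 < s)%N. Proof. exact: ltnW. Qed.
Let half_eta_lt1 : 0 < 1 - eta / 2. Proof. by have := eta_le1; lra. Qed.
Let two_sub_eta_neq0 : 2 - eta != 0. Proof. by rewrite gt_eqF //; have := eta_le1; lra. Qed.

Lemma calib_gap (d : R) : 0 <= d <= 1 ->
  H (eta / 2 + (1 - eta / 2) * d) = (alpha ^+ 2 * d ^+ 2 / (4 * b%:R))%:E.
Proof.
move=> /andP[d0 d1]; apply/le_anti/andP; split.
  have d_geN1 : -1 <= d by lra.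
  apply: ereal_inf_lbound; exists score, (dist d).
  split; first exact: example_score_colspan.
  split; first exact: example_dist_simplex.
  by rewrite example_surr_excess //; split => //; apply: example_task_excess.
apply: le_ereal_inf_tmp => _ [f [q [Ff [Sq [task_ge ->]]]]]; rewrite lee_fin.
have [d' [_ [task_le surr_ge]]] := excess_gap_bounds b_gt1 s_gt0 eta_ge0 eta_le1 Sq Ff.
have dd' : d <= d' by have := le_trans task_ge task_le; rewrite lerD2l ler_pM2l.
apply: le_trans (surr_ge (le_trans d0 dd')).
rewrite ler_wpM2r ?invr_ge0 ?mulr_ge0 ?ler0n // ler_wpM2l ?sqr_ge0 //.
by rewrite ler_sqr ?nnegrE ?(le_trans d0 dd').
Qed.

Lemma calib_eq eps : eta / 2 <= eps <= 1 ->
  H eps = ((eps - eta / 2) ^+ 2 / (4 * b%:R) * (alpha ^+ 2 / (1 - eta / 2) ^+ 2))%:E.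
Proof.
move=> /andP[e0 e1].
have gapE : eps = eta / 2 + (1 - eta / 2) * ((eps - eta / 2) / (1 - eta / 2)).
  by field; rewrite two_sub_eta_neq0.
rewrite {1}gapE calib_gap; last first.
  by rewrite divr_ge0 ?subr_ge0 ?(ltW half_eta_lt1) //= ler_pdivrMr //; lra.
by congr EFin; field; rewrite two_sub_eta_neq0 pnatr_eq0 -lt0n ltnW.
Qed.

Lemma calib_le_half eps : eps <= eta / 2 -> H eps = 0%:E.
Proof.
move=> e_le; apply/le_anti/andP; split.
  apply: ereal_inf_lbound; exists score, (dist 0).
  split; first exact: example_score_colspan.
  split; first by apply: example_dist_simplex; rewrite ?lerN10.
  rewrite example_surr_excess // expr0n /= mulr0 mul0r; split => //.
  by apply: le_trans (example_task_excess _ _ _ _ _ _) => //; rewrite mulr0 addr0.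
apply: le_ereal_inf_tmp => _ [f [q [Ff [[_ q1] [_ ->]]]]].
by rewrite lee_fin surr_excess_ge0.
Qed.

Lemma calib_gt1 eps : 1 < eps -> H eps = +oo%E.
Proof.
move=> e_gt1; apply/ereal_inf_pinfty => x [f [q [Ff [Sq [task_ge _]]]]].
have [d [d1 [task_le _]]] := excess_gap_bounds b_gt1 s_gt0 eta_ge0 eta_le1 Sq Ff.
by exfalso; have := le_trans task_ge task_le; have := half_eta_lt1; nra.
Qed.

Lemma calib_gt0 eps : eta / 2 < eps -> (0 < H eps)%E.
Proof.
move=> e_gt; have [e_le1|e_gt1] := lerP eps 1; last by rewrite calib_gt1 ?ltry.
rewrite calib_eq ?(ltW e_gt) // lte_fin.
have a_gt0 := alpha_gt0 s_gt0 eta_ge0 eta_le1.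
have gap_gt0 : 0 < eps - eta / 2 by rewrite subr_gt0.
have b4_gt0 : 0 < 4 * b%:R :> R by rewrite mulr_gt0 // ltr0n ltnW.
by rewrite mulr_gt0 ?divr_gt0 ?exprn_gt0.
Qed.

End Calibration.

Theorem proposition17 (R : realType) (b s : nat) (eta : R) :
  (2 <= b)%N -> (2 <= s)%N -> 0 <= eta <= 1 ->
  let k := (b * s)%N in
  let H := calib (Phi_quad (@loss01beta R b s eta)) (@loss01beta R b s eta)
                 (colspan (@loss01b R b s)) in
  (forall eps : R, eta / 2 <= eps <= 1 ->
     H eps = ((eps - eta / 2) ^+ 2 / (4 * b%:R)
              * ((eta * b%:R / k%:R + 1 - eta) ^+ 2 / (1 - eta / 2) ^+ 2))%:E) /\
  (forall eps : R, 0 <= eps <= eta / 2 -> H eps = (0 : R)%:E) /\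
  consistent_up_to H (eta / 2).
Proof.
move=> b_gt1 s_gt1 /andP[eta_ge0 eta_le1] k H.
have alphaE : eta * b%:R / k%:R + 1 - eta = alpha s eta.
  rewrite /k /alpha natrM; field.
  by rewrite !pnatr_eq0 -!lt0n ltnW // ltnW.
rewrite {}alphaE {}/H; split; first exact: calib_eq.
split; first by move=> eps /andP[_ e]; rewrite calib_le_half.
split; first exact: calib_gt0.
exists 1; split; first lra.
by rewrite calib_eq //; apply/andP; split; lra.
Qed.
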